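(* Let $f(x)=f_{d|d-1}(x_d|x_{d-1})\cdots f_{2|1}(x_2|x_1)f_1(x_1)$ be the density of a discrete-time Markov process $X=(X_1,\dots,X_d)$, and for $i=2,\dots,d$ let $m_i$ be the rank of $(t,s)\mapsto f_{i|i-1}(t|s)$, $m=\max_i m_i$. For an integer $k\ge0$ with $2k+1\le d$, let $\alpha=\{1,3,\dots,2k+1\}$. Then $\mathrm{rank}_\alpha(f)\le m_2m_3\cdots m_{2k+2}\le m^{2k+1}$ if $2k+1<d$, and $\mathrm{rank}_\alpha(f)\le m_2m_3\cdots m_{2k+1}\le m^{2k}$ if $2k+1=d$. *)

From Stdlib Require Import Reals Arith Lia.
Open Scope R_scope.

Fixpoint rsum (n : nat) (F : nat -> R) : R :=
  match n with O => 0 | S n' => rsum n' F + F n' end.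

Fixpoint nprod (a n : nat) (g : nat -> nat) : nat :=
  match n with O => 1%nat | S n' => (g a * nprod (S a) n' g)%nat end.

Fixpoint nmax (a n : nat) (g : nat -> nat) : nat :=
  match n with O => 0%nat | S n' => Nat.max (g a) (nmax (S a) n' g) end.

(* Density of a Markov chain X_1..X_d (points x : nat -> S, coordinates 1..d):
   f(x) = f_{d|d-1}(x_d|x_{d-1}) ... f_{2|1}(x_2|x_1) f_1(x_1),
   where cond i t s = f_{i|i-1}(t|s). *)
Fixpoint markov_density {S : Type} (f1 : S -> R) (cond : nat -> S -> S -> R)
  (d : nat) (x : nat -> S) : R :=
  match d with
  | O => 1
  | S O => f1 (x 1%nat)
  | S ((S _) as d') => cond d (x d) (x d') * markov_density f1 cond d' x
  end.

Definition rank2_le {S : Type} (g : S -> S -> R) (r : nat) : Prop :=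
  exists (u v : nat -> S -> R),
    forall t s, g t s = rsum r (fun j => u j t * v j s).

Definition is_rank2 {S : Type} (g : S -> S -> R) (m : nat) : Prop :=
  rank2_le g m /\ forall r, rank2_le g r -> (m <= r)%nat.

Definition depends_only {S : Type} (P : nat -> Prop) (g : (nat -> S) -> R) : Prop :=
  forall x y : nat -> S, (forall i, P i -> x i = y i) -> g x = g y.

(* rank_alpha(f) <= r, for f a function of (x_1..x_d) and alpha a subset of {1..d}:
   f(x) = sum_{j<r} g_j(x_alpha) h_j(x_{alpha^c}) *)
Definition alpha_rank_le {S : Type} (d : nat) (alpha : nat -> Prop)
  (f : (nat -> S) -> R) (r : nat) : Prop :=
  exists (g h : nat -> (nat -> S) -> R),
    (forall j, depends_only alpha (g j)) /\
    (forall j, depends_only (fun i => (1 <= i <= d)%nat /\ ~ alpha i) (h j)) /\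
    (forall x, f x = rsum r (fun j => g j x * h j x)).

Definition odd_alpha (k : nat) (i : nat) : Prop :=
  (1 <= i <= 2 * k + 1)%nat /\ Nat.odd i = true.

(* Write f = f_1(x_1) * prod_{i=2}^d f_{i|i-1}(x_i|x_{i-1}).  For i <= 2k+2 exactly one of
   x_i, x_{i-1} is an alpha-coordinate, so the rank-m_i decomposition of f_{i|i-1} is a
   separation of the i-th factor with m_i terms; for i > 2k+2 both coordinates lie outside
   alpha and the factor is a single term, as is f_1(x_1).  Separations multiply: the product
   of a separation with r terms and one with s terms is a separation with r*s terms. *)
From Stdlib Require Import Reals Arith Lia.
Open Scope R_scope.

Lemma rsum_ext n F G : (forall j, (j < n)%nat -> F j = G j) -> rsum n F = rsum n G.
Proof.
  induction n as [|n IH]; intros H; simpl; auto.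
  rewrite IH by (intros; apply H; lia); rewrite H by lia; reflexivity.
Qed.

Lemma rsum_add a b F : rsum (a + b) F = rsum a F + rsum b (fun j => F (a + j)%nat).
Proof.
  induction b as [|b IH]; simpl.
  - rewrite Nat.add_0_r; ring.
  - rewrite Nat.add_succ_r; simpl; rewrite IH; ring.
Qed.

Lemma rsum_mul_l c n F : c * rsum n F = rsum n (fun j => c * F j).
Proof. induction n as [|n IH]; simpl; [ring | rewrite <- IH; ring]. Qed.

Lemma rsum_mul r s F G :
  rsum r F * rsum s G = rsum (r * s) (fun j => F (j / s)%nat * G (j mod s)%nat).
Proof.
  induction r as [|r IH]; simpl; [ring|].
  rewrite (Nat.add_comm s (r * s)), rsum_add, <- IH, Rmult_plus_distr_r.
  f_equal; rewrite rsum_mul_l; apply rsum_ext; intros j Hj.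
  replace ((r * s + j) / s)%nat with r by (apply (Nat.div_unique _ _ _ j); lia).
  replace ((r * s + j) mod s)%nat with j by (apply (Nat.mod_unique _ _ r); lia).
  reflexivity.
Qed.

Lemma rank2_le_transpose {T : Type} (g : T -> T -> R) r :
  rank2_le g r -> rank2_le (fun t s => g s t) r.
Proof.
  intros [u [v E]]; exists v, u; intros t s.
  rewrite E; apply rsum_ext; intros; ring.
Qed.

Section AlphaRank.

Context {T : Type} (d : nat) (alpha : nat -> Prop).

Let outside (i : nat) : Prop := (1 <= i <= d)%nat /\ ~ alpha i.

Lemma alpha_rank_le_ext (F G : (nat -> T) -> R) r :
  (forall x, F x = G x) -> alpha_rank_le d alpha F r -> alpha_rank_le d alpha G r.
Proof.
  intros E [g [h [Hg [Hh HF]]]]; exists g, h; repeat split; auto.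
  intros x; rewrite <- E; auto.
Qed.

Lemma alpha_rank_le_mul (F G : (nat -> T) -> R) r s :
  alpha_rank_le d alpha F r -> alpha_rank_le d alpha G s ->
  alpha_rank_le d alpha (fun x => F x * G x) (r * s).
Proof.
  intros [gF [hF [HgF [HhF HF]]]] [gG [hG [HgG [HhG HG]]]].
  exists (fun j x => gF (j / s)%nat x * gG (j mod s)%nat x),
         (fun j x => hF (j / s)%nat x * hG (j mod s)%nat x).
  repeat split.
  - intros j x y H; rewrite (HgF _ x y H), (HgG _ x y H); reflexivity.
  - intros j x y H; rewrite (HhF _ x y H), (HhG _ x y H); reflexivity.
  - intros x; rewrite HF, HG, rsum_mul; apply rsum_ext; intros; ring.
Qed.

Lemma alpha_rank_le_inside (F : (nat -> T) -> R) :
  depends_only alpha F -> alpha_rank_le d alpha F 1.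
Proof.
  intros H; exists (fun _ => F), (fun _ _ => 1); split; [|split].
  - intros j; exact H.
  - intros j x y _; reflexivity.
  - intros x; simpl; ring.
Qed.

Lemma alpha_rank_le_outside (F : (nat -> T) -> R) :
  depends_only outside F -> alpha_rank_le d alpha F 1.
Proof.
  intros H; exists (fun _ _ => 1), (fun _ => F); split; [|split].
  - intros j x y _; reflexivity.
  - intros j; exact H.
  - intros x; simpl; ring.
Qed.

Lemma alpha_rank_le_cross (g : T -> T -> R) r a b :
  alpha a -> outside b -> rank2_le g r ->
  alpha_rank_le d alpha (fun x => g (x a) (x b)) r.
Proof.
  intros Ha Hb [u [v E]].
  exists (fun j x => u j (x a)), (fun j x => v j (x b)); split; [|split].
  - intros j x y H; rewrite (H a Ha); reflexivity.
  - intros j x y H; rewrite (H b Hb); reflexivity.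
  - intros x; apply E.
Qed.

Lemma alpha_rank_le_cross_transpose (g : T -> T -> R) r a b :
  outside a -> alpha b -> rank2_le g r ->
  alpha_rank_le d alpha (fun x => g (x a) (x b)) r.
Proof.
  intros Ha Hb Hg.
  exact (alpha_rank_le_cross (fun t s => g s t) r b a Hb Ha (rank2_le_transpose g r Hg)).
Qed.

End AlphaRank.

Lemma odd_alpha_succ k j :
  (1 <= j <= 2 * k + 1)%nat -> odd_alpha k (S j) <-> ~ odd_alpha k j.
Proof.
  intros Hj; unfold odd_alpha.
  rewrite Nat.odd_succ, <- Nat.negb_odd.
  destruct (Nat.eq_dec j (2 * k + 1)) as [->|Hne].
  - replace (Nat.odd (2 * k + 1)) with true
      by (symmetry; apply Nat.odd_spec; exists k; reflexivity).
    split; [intros [? _]; lia | intros H; exfalso; apply H; split; [lia | reflexivity]].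
  - destruct (Nat.odd j); simpl; split; intros H.
    + discriminate (proj2 H).
    + exfalso; apply H; split; [lia | reflexivity].
    + intros [_ Ho]; discriminate Ho.
    + split; [lia | reflexivity].
Qed.

Lemma odd_alpha_factor_cross {T : Type} d k (g : T -> T -> R) r j :
  (1 <= j <= 2 * k + 1)%nat -> (S j <= d)%nat -> rank2_le g r ->
  alpha_rank_le d (odd_alpha k) (fun x => g (x (S j)) (x j)) r.
Proof.
  intros Hj Hd Hg; pose proof (odd_alpha_succ k j Hj) as Hsucc.
  destruct (Nat.odd j) eqn:Ho.
  - assert (Hin : odd_alpha k j) by (split; [lia | exact Ho]).
    apply alpha_rank_le_cross_transpose; auto.
    split; [lia | rewrite Hsucc; tauto].
  - apply alpha_rank_le_cross; auto.
    + apply Hsucc; intros [_ Ho']; congruence.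
    + split; [lia | intros [_ Ho']; congruence].
Qed.

Lemma odd_alpha_factor_outside {T : Type} d k (g : T -> T -> R) j :
  (2 * k + 1 < j)%nat -> (S j <= d)%nat ->
  alpha_rank_le d (odd_alpha k) (fun x => g (x (S j)) (x j)) 1.
Proof.
  intros Hj Hd; apply alpha_rank_le_outside; intros x y H.
  rewrite (H (S j)), (H j); auto.
  all: split; [lia | intros [? _]; lia].
Qed.

Lemma nprod_succ_r a n g : nprod a (S n) g = (nprod a n g * g (a + n))%nat.
Proof.
  revert a; induction n as [|n IH]; intros a.
  - cbn [nprod]; rewrite Nat.add_0_r; lia.
  - change (nprod a (S (S n)) g) with (g a * nprod (S a) (S n) g)%nat.
    change (nprod a (S n) g) with (g a * nprod (S a) n g)%nat.
    rewrite IH, Nat.mul_assoc, Nat.add_succ_comm; reflexivity.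
Qed.

Lemma nprod_le_pow a n g M :
  (forall j, (a <= j < a + n)%nat -> (g j <= M)%nat) -> (nprod a n g <= M ^ n)%nat.
Proof.
  revert a; induction n as [|n IH]; intros a H; simpl; auto.
  apply Nat.mul_le_mono; [apply H | apply IH; intros; apply H]; lia.
Qed.

Lemma le_nmax a n g j : (a <= j < a + n)%nat -> (g j <= nmax a n g)%nat.
Proof.
  revert a; induction n as [|n IH]; intros a H; simpl; [lia|].
  destruct (Nat.eq_dec j a) as [->|Hne]; [lia|].
  specialize (IH (S a) ltac:(lia)); lia.
Qed.

Lemma markov_density_alpha_rank_le {T : Type} d k (f1 : T -> R) (cond : nat -> T -> T -> R)
  (mr : nat -> nat) (Hrank : forall i, (2 <= i <= d)%nat -> is_rank2 (cond i) (mr i)) :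
  forall n, (1 <= n <= d)%nat ->
  alpha_rank_le d (odd_alpha k) (markov_density f1 cond n)
    (nprod 2 (Nat.min (n - 1) (2 * k + 1)) mr).
Proof.
  induction n as [|[|n] IH]; intros Hn; [lia| |].
  - apply alpha_rank_le_inside; intros x y H; simpl.
    rewrite H; [reflexivity | split; [lia | reflexivity]].
  - specialize (IH ltac:(lia)).
    assert (Hcond : rank2_le (cond (S (S n))) (mr (S (S n)))) by (apply Hrank; lia).
    apply (alpha_rank_le_ext _ _
             (fun x => markov_density f1 cond (S n) x * cond (S (S n)) (x (S (S n))) (x (S n))));
      [intros x; simpl; ring|].
    destruct (le_lt_dec (S n) (2 * k + 1)) as [Hle|Hgt].
    + replace (Nat.min (S (S n) - 1) (2 * k + 1)) with (S n) by lia.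
      replace (Nat.min (S n - 1) (2 * k + 1)) with n in IH by lia.
      rewrite nprod_succ_r; replace (2 + n)%nat with (S (S n)) by lia.
      apply alpha_rank_le_mul; [exact IH|].
      apply odd_alpha_factor_cross; auto; lia.
    + replace (Nat.min (S (S n) - 1) (2 * k + 1)) with (2 * k + 1)%nat by lia.
      replace (Nat.min (S n - 1) (2 * k + 1)) with (2 * k + 1)%nat in IH by lia.
      rewrite <- (Nat.mul_1_r (nprod 2 (2 * k + 1) mr)).
      apply alpha_rank_le_mul; [exact IH|].
      apply odd_alpha_factor_outside; lia.
Qed.

Theorem mainTheorem9 (S : Type) (d k : nat) (f1 : S -> R) (cond : nat -> S -> S -> R)
  (mr : nat -> nat)
  (Hf1 : forall s, 0 <= f1 s)
  (Hcond : forall i t s, (2 <= i <= d)%nat -> 0 <= cond i t s)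
  (Hrank : forall i, (2 <= i <= d)%nat -> is_rank2 (cond i) (mr i))
  (Hk : (2 * k + 1 <= d)%nat) :
  let m := nmax 2 (d - 1) mr in
  let f := markov_density f1 cond d in
  ((2 * k + 1 < d)%nat ->
     alpha_rank_le d (odd_alpha k) f (nprod 2 (2 * k + 1) mr) /\
     (nprod 2 (2 * k + 1) mr <= m ^ (2 * k + 1))%nat) /\
  ((2 * k + 1 = d)%nat ->
     alpha_rank_le d (odd_alpha k) f (nprod 2 (2 * k) mr) /\
     (nprod 2 (2 * k) mr <= m ^ (2 * k))%nat).
Proof.
  intros m f.
  assert (Hrank_f : alpha_rank_le d (odd_alpha k) f
                      (nprod 2 (Nat.min (d - 1) (2 * k + 1)) mr)).
  { apply markov_density_alpha_rank_le; auto; lia. }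
  assert (Hpow : forall n, (n <= d - 1)%nat -> (nprod 2 n mr <= m ^ n)%nat).
  { intros n Hn; apply nprod_le_pow; intros j Hj; apply le_nmax.
    lia. }
  split; intros Hd; split.
  - replace (2 * k + 1)%nat with (Nat.min (d - 1) (2 * k + 1)) at 1 by lia; exact Hrank_f.
  - apply Hpow; lia.
  - replace (2 * k)%nat with (Nat.min (d - 1) (2 * k + 1)) at 1 by lia; exact Hrank_f.
  - apply Hpow; lia.
Qed.
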